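(* Let $f$ be a homeomorphism of a compact metric space $(X,d)$ and let $\mu$ be a Borel measure on $X$ with $\mu(X)>0$. If $x\in X$ is a $\mu$-uniformly expansive point of $f$, then $x$ is a $\mu$-topologically stable point of $f$. Moreover, if $x$ is also a $\mu$-shadowable point of $f$, then $x$ is a strong $\mu$-topologically stable point of $f$.
   Context: $B(x,\epsilon)$ and $B[x,\epsilon]$ are the open and closed balls; $\mathcal{O}_g(x)=\{g^n(x):n\in\mathbb{Z}\}$; $d_{C^0}(f,g)=\sup_x d(f(x),g(x))$. For a point $x$, $\mathfrak{c}>0$ and $z\in B(x,\mathfrak{c})$, $\Gamma^{\mathfrak{c}}_f(z)=\{y\in B(x,\mathfrak{c}): d(f^n(y),f^n(z))\le\mathfrak{c}\ \forall n\in\mathbb{Z}\}$; $x$ is a $\mu$-uniformly expansive point of $f$ if there is $\mathfrak{c}>0$ with $\mu(\Gamma^{\mathfrak{c}}_f(z))=0$ for every $z\in B(x,\mathfrak{c})$. A $\delta$-pseudo orbit for $f$ is $\{x_n\}_{n\in\mathbb{Z}}$ with $d(f(x_n),x_{n+1})<\delta$ for all $n$; it is through a set $B$ if $x_0\in B$; it is $\epsilon$-traced if there is $y$ with $d(f^n(y),x_n)<\epsilon$ for all $n$. $x$ is $\mu$-shadowable if for every $\epsilon>0$ there are $\delta>0$ and a Borel set $B$ with $\mu(X\setminus B)=0$ such that every $\delta$-pseudo orbit through $B\cap B(x,\delta)$ is $\epsilon$-traced by some point of $X$. For $Z\subset X$, a set-valued map $H:Z\to 2^X$ has domain $Dom(H)=\{z:H(z)\ne\emptyset\}$;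 it is compact valued if each $H(z)$ is compact; $d(H,Id)\le\epsilon$ means $H(z)\subset B[z,\epsilon]$ for all $z$; it is upper semi-continuous if for each $z\in Dom(H)$ and open $O\supset H(z)$ there is $\gamma>0$ with $H(w)\subset O$ whenever $w\in Z$, $d(w,z)<\gamma$; $f\circ H=H\circ g$ means $f(H(z))=H(g(z))$ for all $z$. $x$ is a $\mu$-topologically stable point of $f$ if for every $\epsilon>0$ there is $\delta>0$ such that for every homeomorphism $g$ of $X$ with $d_{C^0}(f,g)\le\delta$ there is an upper semi-continuous compact valued $H:\overline{\mathcal{O}_g(x)}\to 2^X$ with measurable domain such that (i) $\mu(H(z))=0$ for each $z\in B(x,\delta/4)\cap\overline{\mathcal{O}_g(x)}$, (ii) $d(H,Id)\le\epsilon$, (iii) $f\circ H=H\circ g$. $x$ is strong $\mu$-topologically stable if moreover (for the given $\epsilon$, together with $\delta$) there is a Borel set $B$ with $\mu(X\setminus B)=0$ such that additionally (iv) $\mu(X\setminus Dom(H))\le\mu(X\setminus U)$ with $U=B\cap B(x,\delta)\cap\overline{\mathcal{O}_g(x)}$. *)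

(* A compact metric space is given concretely by a
   carrier type X (which also carries a measurable structure) and a real-valued
   metric [dist]; the sigma-algebra of X is required to be the Borel one. *)
From HB Require Import structures.
From mathcomp Require Import all_boot all_order all_algebra.
From mathcomp Require Import all_classical all_reals.
From mathcomp Require Import measure.
Set Implicit Arguments. Unset Strict Implicit. Unset Printing Implicit Defensive.
Import Order.TTheory GRing.Theory Num.Theory.
Local Open Scope classical_set_scope.
Local Open Scope ring_scope.

Section MetricDefs.
Context {R : realType} {X : Type} (dist : X -> X -> R).

Definition is_metric : Prop :=
  [/\ forall x y, 0 <= dist x y,
      forall x y, dist x y = 0 <-> x = y,
      forall x y, dist x y = dist y x &
      forall x y z, dist x z <= dist x y + dist y z].

Definition oball (x : X) (e : R) : set X := [set y | dist x y < e].
Definition cball (x : X) (e : R) : set X := [set y | dist x y <= e].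

Definition dopen (A : set X) : Prop :=
  forall x, A x -> exists2 e : R, 0 < e & oball x e `<=` A.

Definition dclosure (A : set X) : set X :=
  [set y | forall e : R, 0 < e -> exists2 a, A a & dist y a < e].

Definition dcompact (A : set X) : Prop :=
  forall (I : Type) (U : I -> set X), (forall i, dopen (U i)) ->
    A `<=` \bigcup_(i in [set: I]) U i ->
    exists2 F : set I, finite_set F & A `<=` \bigcup_(i in F) U i.

Definition dcont (g : X -> X) : Prop :=
  forall x (e : R), 0 < e -> exists2 del : R, 0 < del &
    forall y, dist x y < del -> dist (g x) (g y) < e.

Definition is_homeo (g ginv : X -> X) : Prop :=
  [/\ cancel g ginv, cancel ginv g, dcont g & dcont ginv].

Definition iterz (g ginv : X -> X) (n : int) (x : X) : X :=
  match n with
  | Posz k => iter k g x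
  | Negz k => iter k.+1 ginv x
  end.

Definition orbit (g ginv : X -> X) (x : X) : set X :=
  [set y | exists n : int, y = iterz g ginv n x].

End MetricDefs.

Section MeasureDefs.
Context {R : realType} {d0 : measure_display} {X : measurableType d0}
  (dist : X -> X -> R) (mu : {measure set X -> \bar R}).

Definition is_borel : Prop := @measurable d0 X = <<s dopen dist >>.

Definition Gamma (f finv : X -> X) (x : X) (c : R) (z : X) : set X :=
  [set y | oball dist x c y /\
           forall n : int, dist (iterz f finv n y) (iterz f finv n z) <= c].

Definition unif_expansive_pt (f finv : X -> X) (x : X) : Prop :=
  exists2 c : R, 0 < c &
    forall z, oball dist x c z -> mu (Gamma f finv x c z) = 0%E.

Definition pseudo_orbit (f : X -> X) (del : R) (xs : int -> X) : Prop :=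
  forall n : int, dist (f (xs n)) (xs (n + 1)) < del.

Definition traced (f finv : X -> X) (e : R) (xs : int -> X) : Prop :=
  exists y, forall n : int, dist (iterz f finv n y) (xs n) < e.

Definition shadowable_pt (f finv : X -> X) (x : X) : Prop :=
  forall e : R, 0 < e -> exists2 del : R, 0 < del &
    exists B : set X, [/\ measurable B, mu (~` B) = 0%E &
      forall xs : int -> X, pseudo_orbit f del xs ->
        (B `&` oball dist x del) (xs 0) -> traced f finv e xs].

(* Properties of H : Z -> 2^X (represented as H : X -> set X restricted to Z) *)
Definition dom (Z : set X) (H : X -> set X) : set X :=
  [set z | Z z /\ H z !=set0].

Definition usc (Z : set X) (H : X -> set X) : Prop :=
  forall z, dom Z H z -> forall O : set X, dopen dist O -> H z `<=` O ->
    exists2 gam : R, 0 < gam &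
      forall w, Z w -> dist w z < gam -> H w `<=` O.

Definition compact_valued (Z : set X) (H : X -> set X) : Prop :=
  forall z, Z z -> dcompact dist (H z).

Definition stab_H (f g ginv : X -> X) (x : X) (e del : R) (H : X -> set X)
  : Prop :=
  let Z := dclosure dist (orbit g ginv x) in
  [/\ usc Z H /\ compact_valued Z H, measurable (dom Z H),
      (forall z, (oball dist x (del / 4) `&` Z) z -> mu (H z) = 0%E),
      (forall z, Z z -> H z `<=` cball dist z e) &
      (forall z, Z z -> f @` H z = H (g z))].

Definition top_stable_pt (f : X -> X) (x : X) : Prop :=
  forall e : R, 0 < e -> exists2 del : R, 0 < del &
    forall g ginv : X -> X, is_homeo dist g ginv ->
      (forall y, dist (f y) (g y) <= del) ->
      exists H : X -> set X, stab_H f g ginv x e del H.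

Definition strong_top_stable_pt (f : X -> X) (x : X) : Prop :=
  forall e : R, 0 < e -> exists2 del : R, 0 < del &
    exists B : set X, [/\ measurable B, mu (~` B) = 0%E &
      forall g ginv : X -> X, is_homeo dist g ginv ->
        (forall y, dist (f y) (g y) <= del) ->
        exists H : X -> set X, stab_H f g ginv x e del H /\
          let Z := dclosure dist (orbit g ginv x) in
          (mu (~` dom Z H) <= mu (~` (B `&` oball dist x del `&` Z)))%E].

End MeasureDefs.

(* Fix e' <= min(e, c/2), c the expansivity constant at x, and, for a
   homeomorphism g, let H(z) be the set of points whose f-orbit e'-shadows the
   g-orbit of z.  Each H(z) is closed, hence compact, and f(H(z)) = H(g(z)).
   A compactness argument shows that the condition "y is not in H(w)", i.e.
   d(f^n y, g^n w) > e' for some n, is uniform for y outside an open set and w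
   near z: this is upper semi-continuity, and it also makes the domain of H
   closed.  If z is near x, two points of H(z) have orbits 2e'-close, so H(z)
   lies in a set Gamma of measure zero.  When x is moreover shadowable, the
   g-orbit of a point z of the full-measure set B near x is a pseudo orbit of
   f, and the point tracing it lies in H(z); so the domain of H covers B near
   x. *)
From HB Require Import structures.
From mathcomp Require Import all_boot all_order all_algebra.
From mathcomp Require Import all_classical all_reals.
From mathcomp Require Import measure.
From mathcomp Require Import lra zify.
Import Order.TTheory GRing.Theory Num.Theory.
Local Open Scope classical_set_scope.
Local Open Scope ring_scope.

Lemma finite_pos_lower_bound {R : realFieldType} (A : set R) :
  finite_set A -> (forall r, A r -> 0 < r) ->
  exists2 m, 0 < m & forall r, A r -> m <= r.
Proof.
move=> /finite_seqP [s ->]; elim: s => [|a s IH] As_gt0; first by exists 1.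
have [|m m_gt0 mle] := IH; first by move=> r rs; apply: As_gt0; rewrite /= inE rs orbT.
have a_gt0 : 0 < a by apply: As_gt0; rewrite /= inE eqxx.
exists (Order.min a m); first by rewrite lt_min a_gt0 m_gt0.
move=> r; rewrite /= inE => /orP [/eqP ->|rs]; first by rewrite ge_min lexx.
by rewrite ge_min mle ?orbT.
Qed.

Section IterZ.
Context {X : Type} {g ginv : X -> X} (gK : cancel g ginv) (ginvK : cancel ginv g).

Lemma iterzSr n z : iterz g ginv (n + 1) z = iterz g ginv n (g z).
Proof.
case: n => [k|[|k]].
- have -> : Posz k + 1 = Posz k.+1 by lia.
  exact: iterSr.
- have -> : Negz 0 + 1 = 0 by rewrite NegzE; lia.
  by rewrite /= gK.
- have -> : Negz k.+1 + 1 = Negz k by rewrite !NegzE; lia.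
  by rewrite [RHS](iterSr k.+1) gK.
Qed.

Lemma iterzS n z : iterz g ginv (n + 1) z = g (iterz g ginv n z).
Proof.
case: n => [k|[|k]].
- by have -> : Posz k + 1 = Posz k.+1 by lia.
- have -> : Negz 0 + 1 = 0 by rewrite NegzE; lia.
  by rewrite /= ginvK.
- have -> : Negz k.+1 + 1 = Negz k by rewrite !NegzE; lia.
  by rewrite /= ginvK.
Qed.

End IterZ.

Definition shadowing_set {R : realType} {X : Type} (dist : X -> X -> R)
  (F : int -> X -> X) (a : int -> X) (e : R) : set X :=
  [set y | forall n, dist (F n y) (a n) <= e].

Section Metric.
Context {R : realType} {X : Type} {dist : X -> X -> R}.
Hypothesis dist_metric : is_metric dist.

Lemma distC a b : dist a b = dist b a. Proof. by case: dist_metric. Qed.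
Lemma dist_triangle a b c : dist a c <= dist a b + dist b c.
Proof. by case: dist_metric. Qed.
Lemma distxx a : dist a a = 0. Proof. by case: dist_metric => _ /(_ a a) [_ ->]. Qed.

Lemma dopen_oball a r : dopen dist (oball dist a r).
Proof.
move=> p ap; exists (r - dist a p); first by rewrite subr_gt0.
move=> q pq; rewrite /oball /= in ap pq *.
by have := dist_triangle a p q; lra.
Qed.

Lemma dopenC_dclosure A : dopen dist (~` dclosure dist A).
Proof.
move=> p /= /existsNP [e /not_implyP [e_gt0 /forall2NP farA]].
exists (e / 2) => [|q pq clq]; first by rewrite divr_gt0.
have [a Aa qa] := clq (e / 2) ltac:(by rewrite divr_gt0).
have [//|] := farA a; rewrite /oball /= in pq.
by have := dist_triangle p q a; lra.
Qed.

Lemma dcompact_closed K : dcompact dist [set: X] -> dopen dist (~` K) ->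
  dcompact dist K.
Proof.
move=> cX oKC I U oU KU.
have [[k0 Kk0]|K0] := pselect (K !=set0); last first.
  by exists set0 => // p Kp; case: K0; exists p.
have [i0 _ _] := KU k0 Kk0.
have [||F finF XF] := cX I (fun i => U i `|` ~` K).
- move=> i p [Up|KCp].
    by have [r r_gt0 pU] := oU i p Up; exists r => // q /pU; left.
  by have [r r_gt0 pKC] := oKC p KCp; exists r => // q /pKC; right.
- move=> p _; have [Kp|KCp] := pselect (K p); last by exists i0 => //; right.
  by have [i _ Uip] := KU p Kp; exists i => //; left.
exists F => // p Kp; have [i Fi [Uip|//]] := XF p Logic.I.
by exists i.
Qed.

Lemma dcont_iter g k : dcont dist g -> dcont dist (iter k g).
Proof.
move=> cg; elim: k => [|k IH] p e e_gt0 /=; first by exists e.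
have [r r_gt0 close_g] := cg (iter k g p) e e_gt0.
have [s s_gt0 close_iter] := IH p r r_gt0.
by exists s => // q /close_iter /close_g.
Qed.

Lemma dcont_iterz g ginv n : dcont dist g -> dcont dist ginv ->
  dcont dist (iterz g ginv n).
Proof. by move=> cg cginv; case: n => k /=; apply: dcont_iter. Qed.

Lemma dist_gt_near {phi psi : X -> X} {y z e} : dcont dist phi -> dcont dist psi ->
  e < dist (phi y) (psi z) ->
  exists2 r, 0 < r & forall y' w, dist y y' < r -> dist z w < r ->
    e < dist (phi y') (psi w).
Proof.
move=> cphi cpsi gt_e; set eta := (dist (phi y) (psi z) - e) / 2.
have eta_gt0 : 0 < eta by rewrite divr_gt0 // subr_gt0.
have [r1 r1_gt0 close_phi] := cphi y eta eta_gt0.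
have [r2 r2_gt0 close_psi] := cpsi z eta eta_gt0.
exists (Order.min r1 r2) => [|y' w]; first by rewrite lt_min r1_gt0 r2_gt0.
rewrite !lt_min => /andP [/close_phi yy' _] /andP [_ /close_psi zw].
have := dist_triangle (phi y) (phi y') (psi z).
have := dist_triangle (phi y') (psi w) (psi z).
by move: yy' zw; rewrite (distC (psi w)) /eta; lra.
Qed.

Lemma not_shadowing F a e y : ~ shadowing_set dist F a e y ->
  exists n, e < dist (F n y) (a n).
Proof. by move=> /existsNP [n /negP]; rewrite -ltNge; exists n. Qed.

Section Shadowing.
Context {F G : int -> X -> X} {e : R}.
Hypotheses (cF : forall n, dcont dist (F n)) (cG : forall n, dcont dist (G n)).

Lemma dopenC_shadowing_set a : dopen dist (~` shadowing_set dist F a e).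
Proof.
move=> p /not_shadowing [n gt_e].
have [r r_gt0 close_F] := cF n p (dist (F n p) (a n) - e) ltac:(by rewrite subr_gt0).
exists r => // q /close_F pq shq; have := shq n.
by have := dist_triangle (F n p) (F n q) (a n); lra.
Qed.

(* A point y outside O is separated from the G-orbit of z at some time n, and
   by continuity so is every point near y from the G-orbit of every point near
   z; finitely many such neighbourhoods of y cover the compact set ~` O. *)
Lemma shadowing_set_usc z (O : set X) : dcompact dist [set: X] -> dopen dist O ->
  shadowing_set dist F (fun n => G n z) e `<=` O ->
  exists2 gam, 0 < gam & forall w, dist z w < gam ->
    shadowing_set dist F (fun n => G n w) e `<=` O.
Proof.
move=> cX oO shzO.
have sep y : exists r : R, 0 < r /\ (~ O y -> exists n, forall y' w,
    dist y y' < r -> dist z w < r -> e < dist (F n y') (G n w)).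
  have [Oy|nOy] := pselect (O y); first by exists 1.
  have /not_shadowing [n gt_e] : ~ shadowing_set dist F (fun n => G n z) e y.
    by move/shzO.
  have [r r_gt0 near_gt_e] := dist_gt_near (cF n) (cG n) gt_e.
  by exists r; split => // _; exists n.
have [r rP] := choice sep.
pose U y := O `|` [set y' | ~ O y /\ dist y y' < r y].
have [||I finI XU] := cX X U.
- move=> y p [Op|[nOy yp]].
    by have [s s_gt0 pO] := oO p Op; exists s => // q /pO; left.
  have [s s_gt0 pball] := dopen_oball y (r y) p yp.
  by exists s => // q /pball yq; right.
- move=> p _; exists p => //; have [Op|nOp] := pselect (O p); [left | right] => //.
  by split => //; rewrite distxx; case: (rP p).
have [|gam gam_gt0 gam_le] := finite_pos_lower_bound _ (finite_image r finI).
  by move=> _ [i _ <-]; case: (rP i).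
exists gam => // w zw y shy; apply: contrapT => nOy.
have [i Ii [//|[nOi iy]]] := XU y Logic.I.
have [n sep_n] := (rP i).2 nOi.
have := shy n; rewrite leNgt sep_n //.
exact: lt_le_trans zw (gam_le _ (ex_intro2 _ _ i Ii erefl)).
Qed.

End Shadowing.
End Metric.

Section Borel.
Context {R : realType} {d0 : measure_display} {X : measurableType d0}.
Context {dist : X -> X -> R}.
Hypothesis dist_borel : is_borel dist.

Lemma dopen_measurable A : dopen dist A -> measurable A.
Proof. by rewrite dist_borel => oA; apply: sub_sigma_algebra. Qed.

Lemma dopenC_measurable A : dopen dist (~` A) -> measurable A.
Proof. by move=> /dopen_measurable /measurableC; rewrite setCK. Qed.

End Borel.

Definition shadow_map {R : realType} {X : Type} (dist : X -> X -> R)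
  (f finv g ginv : X -> X) (e : R) (z : X) : set X :=
  shadowing_set dist (iterz f finv) (fun n => iterz g ginv n z) e.

Section ShadowMap.
Context {R : realType} {d0 : measure_display} {X : measurableType d0}.
Context {dist : X -> X -> R} {mu : {measure set X -> \bar R}}.
Context {f finv g ginv : X -> X} {e : R}.
Hypotheses (dist_metric : is_metric dist) (dist_borel : is_borel dist).
Hypothesis cX : dcompact dist [set: X].
Hypotheses (f_homeo : is_homeo dist f finv) (g_homeo : is_homeo dist g ginv).

Local Notation shadow_map := (shadow_map dist f finv g ginv e).

Let dcont_iterz_f n : dcont dist (iterz f finv n).
Proof. by case: f_homeo => _ _; apply: dcont_iterz. Qed.

Let dcont_iterz_g n : dcont dist (iterz g ginv n).
Proof. by case: g_homeo => _ _; apply: dcont_iterz. Qed.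

Lemma shadow_map_usc Z : usc dist Z shadow_map.
Proof.
move=> z _ O oO Hz_O.
have [gam gam_gt0 near_sub] :=
  shadowing_set_usc dist_metric dcont_iterz_f dcont_iterz_g z O cX oO Hz_O.
by exists gam => // w _ wz; apply: near_sub; rewrite distC.
Qed.

Lemma shadow_map_compact Z : compact_valued dist Z shadow_map.
Proof.
move=> z _; apply: dcompact_closed cX _.
exact: (dopenC_shadowing_set dist_metric dcont_iterz_f).
Qed.

Lemma dopenC_dom_shadow_map Z : dopen dist (~` Z) ->
  dopen dist (~` dom Z shadow_map).
Proof.
move=> oZC p ndom_p; have [Zp|nZp] := pselect (Z p); last first.
  by have [r r_gt0 pZC] := oZC p nZp; exists r => // q /pZC nZq [].
have oset0 : dopen dist set0 by [].
have Hp0 : shadow_map p `<=` set0.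
  by move=> y Hpy; apply: ndom_p; split => //; exists y.
have [gam gam_gt0 near_empty] := shadowing_set_usc dist_metric
  dcont_iterz_f dcont_iterz_g p set0 cX oset0 Hp0.
by exists gam => // w /near_empty Hw0 [_ [y /Hw0]].
Qed.

Lemma shadow_map_cball z : shadow_map z `<=` cball dist z e.
Proof. by move=> y /(_ 0); rewrite /cball /= distC. Qed.

Lemma shadow_map_conj z : f @` shadow_map z = shadow_map (g z).
Proof.
have [fK finvK _ _] := f_homeo; have [gK _ _ _] := g_homeo.
apply/seteqP; split => [_ [y Hzy <-] n | y Hgzy].
  by have := Hzy (n + 1); rewrite (iterzSr fK) (iterzSr gK).
exists (finv y); last by rewrite finvK.
move=> n; rewrite -[n](subrK 1) (iterzSr fK) (iterzSr gK) finvK.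
exact: Hgzy.
Qed.

Lemma shadow_map_sub_Gamma (c : R) x z w : e <= c / 2 -> dist x z < c / 2 ->
  shadow_map z w -> shadow_map z `<=` Gamma dist f finv x c w.
Proof.
move=> ec xz Hzw y Hzy; split.
  have /shadow_map_cball zy := Hzy; rewrite /cball /oball /= in zy *.
  by have := dist_triangle dist_metric x z y; lra.
move=> n; have := Hzy n; have := Hzw n.
have := dist_triangle dist_metric (iterz f finv n y) (iterz g ginv n z)
  (iterz f finv n w).
by rewrite (distC dist_metric (iterz g ginv n z)); lra.
Qed.

Lemma shadow_map_nonempty x del ds (B : set X) z : del < ds ->
  (forall y, dist (f y) (g y) <= del) ->
  (forall xs, pseudo_orbit dist f ds xs ->
    (B `&` oball dist x ds) (xs 0) -> traced dist f finv e xs) ->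
  B z -> oball dist x ds z -> shadow_map z !=set0.
Proof.
move=> del_ds fg trace Bz xz; have [_ ginvK _ _] := g_homeo.
have [|//|y yz] := trace (fun n => iterz g ginv n z).
  by move=> n /=; rewrite (iterzS ginvK); have := fg (iterz g ginv n z); lra.
by exists y => n; apply/ltW/yz.
Qed.

Lemma shadow_map_mu0 (c : R) x z :
  (forall w, oball dist x c w -> mu (Gamma dist f finv x c w) = 0%E) ->
  e <= c / 2 -> dist x z < c / 2 -> mu (shadow_map z) = 0%E.
Proof.
move=> Gamma0 ec xz; have [[w Hzw]|/nonemptyPn ->] := pselect (shadow_map z !=set0);
  last exact: measure0.
have HzG := shadow_map_sub_Gamma c x z w ec xz Hzw.
have mH c' a : measurable (shadowing_set dist (iterz f finv) a c').
  exact/(dopenC_measurable dist_borel)/(dopenC_shadowing_set dist_metric).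
apply/eqP; rewrite eq_le measure_ge0 andbT -(Gamma0 w (HzG w Hzw).1).
apply: le_measure; rewrite ?inE //; first exact: mH.
apply: measurableI; last exact: mH.
exact/(dopen_measurable dist_borel)/dopen_oball.
Qed.

Lemma stab_H_shadow_map x (c eps del : R) :
  (forall w, oball dist x c w -> mu (Gamma dist f finv x c w) = 0%E) ->
  0 < c -> del <= c -> e <= c / 2 -> e <= eps ->
  stab_H dist mu f g ginv x eps del shadow_map.
Proof.
move=> Gamma0 c_gt0 del_c ec e_eps; split.
- by split; [apply: shadow_map_usc | apply: shadow_map_compact].
- apply/(dopenC_measurable dist_borel)/dopenC_dom_shadow_map.
  exact: dopenC_dclosure dist_metric _.
- move=> z [xz _]; apply: (shadow_map_mu0 c x z Gamma0 ec).
  by rewrite /oball /= in xz; lra.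
- by move=> z _ y /shadow_map_cball; rewrite /cball /=; lra.
- by move=> z _; apply: shadow_map_conj.
Qed.

Lemma mu_setC_dom_shadow_map x del ds (B Z : set X) :
  measurable B -> dopen dist (~` Z) -> del < ds ->
  (forall y, dist (f y) (g y) <= del) ->
  (forall xs, pseudo_orbit dist f ds xs ->
    (B `&` oball dist x ds) (xs 0) -> traced dist f finv e xs) ->
  (mu (~` dom Z shadow_map) <= mu (~` (B `&` oball dist x del `&` Z)))%E.
Proof.
move=> mB oZC del_ds fg trace; apply: le_measure; rewrite ?inE.
- exact/measurableC/(dopenC_measurable dist_borel)/dopenC_dom_shadow_map.
- apply/measurableC/measurableI; last exact: dopenC_measurable dist_borel _ oZC.
  exact/measurableI/(dopen_measurable dist_borel)/dopen_oball.
- move=> p ndom [[Bp xp] Zp]; apply: ndom; split => //.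
  apply: (shadow_map_nonempty x del ds B p del_ds fg trace Bp).
  by rewrite /oball /= in xp *; lra.
Qed.

End ShadowMap.

Theorem theorem3p9 (R : realType) (d0 : measure_display) (X : measurableType d0)
  (dist : X -> X -> R) (mu : {measure set X -> \bar R}) (f finv : X -> X) (x : X) :
  is_metric dist -> dcompact dist [set: X] -> is_borel dist ->
  is_homeo dist f finv -> (0 < mu [set: X])%E ->
  unif_expansive_pt dist mu f finv x ->
  top_stable_pt dist mu f x /\
  (shadowable_pt dist mu f finv x -> strong_top_stable_pt dist mu f x).
Proof.
move=> dist_metric cX dist_borel f_homeo _ [c c_gt0 Gamma0].
have small_e eps : 0 < eps -> exists2 e, 0 < e & e <= c / 2 /\ e <= eps.
  move=> eps_gt0; exists (Order.min eps (c / 2)).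
    by rewrite lt_min eps_gt0 divr_gt0.
  by rewrite !ge_min !lexx orbT.
split => [eps eps_gt0|shadowable eps eps_gt0];
  have [e e_gt0 [e_c e_eps]] := small_e eps eps_gt0.
  exists c => // g ginv g_homeo _; exists (shadow_map dist f finv g ginv e).
  exact: (stab_H_shadow_map dist_metric dist_borel cX f_homeo g_homeo x c eps c
    Gamma0 c_gt0 (lexx c) e_c e_eps).
have [ds ds_gt0 [B [mB muBC trace]]] := shadowable e e_gt0.
pose del := Order.min c (ds / 2).
have del_gt0 : 0 < del by rewrite lt_min c_gt0 divr_gt0.
have /andP [del_c del_ds] : (del <= c) && (del <= ds / 2) by rewrite -le_min.
exists del => //; exists B; split => // g ginv g_homeo fg.
exists (shadow_map dist f finv g ginv e); split.
  exact: (stab_H_shadow_map dist_metric dist_borel cX f_homeo g_homeo x c eps del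
    Gamma0 c_gt0 del_c e_c e_eps).
apply: (mu_setC_dom_shadow_map dist_metric dist_borel cX f_homeo g_homeo
  x del ds B _ mB (dopenC_dclosure dist_metric _) _ fg trace).
by lra.
Qed.
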